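(* Let $(n_i)_{i\ge1}$ be a strictly increasing sequence of natural numbers and set $C=\bigcup_{i\ge1}[n_i,2n_i)$. Then there exist a set $D\subseteq\mathbb{N}$ of upper density $0$ and a binary function $h\in\mathscr{C}_{I_{\bar d=0}}$ such that $h[C\times D]=\mathbb{N}$.
   Context: $\mathbb{N}=\{0,1,2,\dots\}$. For $A\subseteq\mathbb{N}$, $\bar d(A)=\limsup_{n\to\infty}\frac{|A\cap[0,n)|}{n}$. $\mathscr{C}_{I_{\bar d=0}}$ is the set of all finitary functions $f:\mathbb{N}^k\to\mathbb{N}$ ($k\ge1$) such that $\bar d(f[A^k])=0$ whenever $\bar d(A)=0$. Intervals are intervals of natural numbers. *)

From HB Require Import structures.
From mathcomp Require Import all_boot all_order all_algebra.
From mathcomp Require Import all_classical all_reals.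
From mathcomp Require Import topology normedtype sequences Rstruct.
Set Implicit Arguments. Unset Strict Implicit. Unset Printing Implicit Defensive.
Import Order.TTheory GRing.Theory Num.Theory.
Local Open Scope classical_set_scope.
Local Open Scope ring_scope.

Definition RR := Rdefinitions.R.

(* |A ∩ [0,n)| / n as a real number (0/0 = 0 for n = 0, irrelevant for limsup). *)
Definition dens_ratio (A : set nat) (n : nat) : RR :=
  (\sum_(i < n) ((i : nat) \in A)%:R) / n%:R.

Definition upper_density (A : set nat) : \bar RR :=
  limn_esup (fun n => (dens_ratio A n)%:E).

Definition image_pow (k : nat) (f : ('I_k -> nat) -> nat) (A : set nat) : set nat :=
  f @` [set v : 'I_k -> nat | forall i, A (v i)].

Definition in_clone_dzero (k : nat) (f : ('I_k -> nat) -> nat) : Prop :=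
  (1 <= k)%N /\
  forall A : set nat, upper_density A = 0%E -> upper_density (image_pow f A) = 0%E.

Definition binary_as_fun (h : nat -> nat -> nat) : ('I_2 -> nat) -> nat :=
  fun v => h (v ord0) (v ord_max).

From HB Require Import structures.
From mathcomp Require Import all_boot all_order all_algebra.
From mathcomp Require Import all_classical all_reals.
From mathcomp Require Import topology normedtype sequences Rstruct.
From mathcomp Require Import ereal zify.
Set Implicit Arguments. Unset Strict Implicit. Unset Printing Implicit Defensive.
Import Order.TTheory GRing.Theory Num.Theory.
Import numFieldNormedType.Exports.
Local Open Scope classical_set_scope.

(* Pass to a sparse subsequence m_0 < m_1 < ... of (n_i) with m_{t+1} >= (t+2) m_t
   and take D = {4^c}.  The second argument 4^c of h encodes a pair (t, k), and
   h x 4^c = x + k m_t whenever x lies in [m_t, 2 m_t) and the result stays below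
   m_{t+1}; every number in [m_t, m_{t+1}) is reached this way from C.  Conversely
   h[A x A] meets [m_t, m_{t+1}) only in translates by multiples of m_t of
   A ∩ [m_t, 2 m_t), so on [0, M) with m_{T} <= M < m_{T+1} it has at most
   m_{T-1} + (m_T / m_{T-1} + 1) |A ∩ [0, 2 m_{T-1})| + (M / m_T + 1) |A ∩ [0, 2 m_T)|
   elements, which is o(M) when A has density zero because m_T >= (T+1) m_{T-1}. *)

Definition counting (A : set nat) (N : nat) : nat :=
  (\sum_(i < N) ((i : nat) \in A))%N.

Lemma countingS (A : set nat) N : counting A N.+1 = (counting A N + (N \in A))%N.
Proof. by rewrite /counting big_ord_recr. Qed.

Lemma counting_addn (A : set nat) N P :
  counting A (N + P) = (counting A N + \sum_(r < P) ((N + r)%N \in A))%N.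
Proof. by rewrite /counting big_split_ord. Qed.

Lemma counting_le (A : set nat) N : (counting A N <= N)%N.
Proof.
elim: N => [|N IH]; first by rewrite /counting big_ord0.
by rewrite countingS; case: (N \in A); lia.
Qed.

Lemma le_counting (A : set nat) N P : (N <= P)%N -> (counting A N <= counting A P)%N.
Proof. by move=> /subnK <-; rewrite addnC counting_addn leq_addr. Qed.

Lemma counting_sub (A B : set nat) N :
  (forall z, (z < N)%N -> A z -> B z) -> (counting A N <= counting B N)%N.
Proof.
move=> AB; apply: leq_sum => i _.
by case: (boolP ((i : nat) \in A)) => // /set_mem /(AB _ (ltn_ord i)) /mem_set ->.
Qed.

Lemma counting_setU (A B : set nat) N :
  (counting (A `|` B) N <= counting A N + counting B N)%N.
Proof.
rewrite /counting -big_split /=; apply: leq_sum => i _.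
case: (boolP ((i : nat) \in A `|` B)) => // /set_mem [/mem_set -> //|/mem_set ->].
by rewrite addn1.
Qed.

Lemma counting_bounded (A : set nat) N L :
  (forall z, A z -> (z < L)%N) -> (counting A N <= counting A L)%N.
Proof.
move=> AL; have [NL|LN] := leqP N L; first exact: le_counting.
rewrite -(subnKC (ltnW LN)) counting_addn big1 ?addn0 // => i _.
by case: (boolP (_ \in A)) => // /set_mem /AL; rewrite ltnNge leq_addr.
Qed.

Lemma counting_le_bound (A : set nat) N L :
  (forall z, A z -> (z < L)%N) -> (counting A N <= L)%N.
Proof. by move=> AL; apply: leq_trans (counting_bounded N AL) (counting_le _ _). Qed.

Lemma counting_set1 a N : (counting [set a] N <= 1)%N.
Proof.
apply: leq_trans (counting_bounded (L := a.+1) N _) _; first by move=> z ->.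
rewrite countingS; have -> : counting [set a] a = 0%N.
  apply: big1 => i _; case: (boolP (_ \in _)) => // /set_mem /= ia.
  by have := ltn_ord i; rewrite ia ltnn.
by rewrite add0n leq_b1.
Qed.

Definition window_count (A : set nat) m := (\sum_(r < m) ((m + r)%N \in A))%N.

Lemma window_count_le (A : set nat) m : (window_count A m <= counting A (2 * m))%N.
Proof. by rewrite mul2n -addnn counting_addn leq_addl. Qed.

Lemma counting_periodic_mul (A : set nat) m q :
  counting [set z | A (m + z %% m)%N] (q * m) = (q * window_count A m)%N.
Proof.
elim: q => [|q IH]; first by rewrite /counting big_ord0.
rewrite mulSn addnC counting_addn IH mulSn addnC; congr (_ + _)%N.
apply: eq_bigr => r _; congr nat_of_bool; apply/idP/idP => /set_mem H; apply/mem_set;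
  by move: H => /=; rewrite modnMDl modn_small.
Qed.

Lemma counting_periodic (A : set nat) m L : (0 < m)%N ->
  (counting [set z | A (m + z %% m)%N] L <= (L %/ m).+1 * counting A (2 * m))%N.
Proof.
move=> m_gt0; apply: leq_trans (le_counting _ (ltnW (ltn_ceil L m_gt0))) _.
by rewrite counting_periodic_mul leq_mul2l window_count_le orbT.
Qed.

Definition density_zero (A : set nat) : Prop :=
  forall K, (0 < K)%N -> exists N0, forall N, (N0 <= N)%N -> (K * counting A N <= N)%N.

Lemma density_zero_sub (A B : set nat) : A `<=` B -> density_zero B -> density_zero A.
Proof.
move=> AB dzB K K_gt0; have [N0 HN0] := dzB K K_gt0; exists N0 => N /HN0.
by apply: leq_trans; rewrite leq_mul2l counting_sub ?orbT // => z _ /AB.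
Qed.

Definition pow4 : set nat := [set y | exists c, y = 4 ^ c]%N.

Lemma counting_pow4 s : (counting pow4 (4 ^ s) <= s)%N.
Proof.
elim: s => [|s IH].
  rewrite expn0 countingS /counting big_ord0 leqn0 eqb0.
  by apply/negP => /set_mem [c] /esym/eqP; rewrite expn_eq0.
apply: leq_trans (counting_sub (B := [set z | pow4 z /\ z < 4 ^ s]%N `|` [set 4 ^ s]%N) _) _.
  move=> z + [c zE]; rewrite {}zE ltn_exp2l // ltnS leq_eqVlt => /orP[/eqP->|cs].
    by right.
  by left; split; [exists c | rewrite ltn_exp2l].
apply: leq_trans (counting_setU _ _ _) _.
rewrite -[s.+1]addn1; apply: leq_add; last exact: counting_set1.
apply: leq_trans (counting_bounded _ (L := 4 ^ s) _) _; first by move=> z [].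
by apply: leq_trans IH; apply: counting_sub => z _ [].
Qed.

Lemma density_zero_pow4 : density_zero pow4.
Proof.
move=> K K_gt0; exists (4 ^ K.+1)%N => N HN.
have N_gt0 : (0 < N)%N by apply: leq_trans HN; rewrite expn_gt0.
have /andP[logN_le logN_gt] := trunc_log_bounds (isT : 1 < 4)%N N_gt0.
set s := trunc_log 4 N in logN_le logN_gt.
have Ks : (K.+1 <= s)%N by apply: trunc_log_max.
have cnt_s : (counting pow4 N <= s.+1)%N.
  exact: leq_trans (le_counting _ (ltnW logN_gt)) (counting_pow4 _).
apply: leq_trans (leq_mul (leqnn K) cnt_s) (leq_trans _ logN_le).
have -> : (4 ^ s = 2 ^ s * 2 ^ s)%N by rewrite -expnMn.
apply: leq_mul; last exact: ltn_expl.
apply: leq_trans (ltnW (ltn_expl K (isT : 1 < 2)%N)) _.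
by rewrite leq_exp2l // ltnW.
Qed.

Section Spread.

Variable m : nat -> nat.
Hypothesis m_gt0 : forall t, (0 < m t)%N.
Hypothesis m_grow : forall t, (t.+2 * m t <= m t.+1)%N.

Lemma m_lt t : (m t < m t.+1)%N.
Proof. by apply: leq_trans (m_grow t); have := m_gt0 t; lia. Qed.

Lemma m_ge t : (t <= m t)%N.
Proof. by elim: t => // t IH; apply: leq_ltn_trans IH (m_lt t). Qed.

Lemma m_mono : {homo m : t u / (t <= u)%N}.
Proof. apply: ltnW_homo; apply: homo_ltn m_lt; exact: ltn_trans. Qed.

Lemma m_segment M : (m 0 <= M)%N -> exists T, (m T <= M < m T.+1)%N.
Proof.
move=> m0M; have ex : exists t, (m t <= M)%N by exists 0%N.
have bnd t : (m t <= M)%N -> (t <= M)%N by apply: leq_trans (m_ge t).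
case: (ex_maxnP ex bnd) => T mTM maxT; exists T; rewrite mTM ltnNge /=.
by apply/negP => /maxT; rewrite ltnn.
Qed.

Definition copies (A : set nat) t : set nat := [set z | exists k x, A x /\
  (m t <= x < 2 * m t)%N /\ (x + k * m t < m t.+1)%N /\ z = (x + k * m t)%N].

Definition spread (A : set nat) : set nat :=
  [set z | (z < m 0)%N \/ exists t, copies A t z].

Lemma copiesP A t z : copies A t z ->
  [/\ A (m t + z %% m t)%N, (m t <= z)%N & (z < m t.+1)%N].
Proof.
move=> [k [x [Ax [/andP[x_ge x_lt] [z_lt ->]]]]]; split => //; last lia.
have -> : (x + k * m t = k.+1 * m t + (x - m t))%N by rewrite mulSn; lia.
by rewrite modnMDl modn_small ?subnKC //; lia.
Qed.

Lemma counting_copies A t L :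
  (counting (copies A t) L <= (L %/ m t).+1 * counting A (2 * m t))%N.
Proof.
apply: leq_trans (counting_periodic A L (m_gt0 t)).
by apply: counting_sub => z _ /copiesP[].
Qed.

Lemma spread_cover A U z : spread A z -> (z < m U.+2)%N ->
  [\/ (z < m U)%N, copies A U z | copies A U.+1 z].
Proof.
move=> [z_lt|[t Azt]] z_lt'; first by apply: Or31; apply: leq_trans z_lt (m_mono _).
have [t_ge t_lt] : (m t <= z)%N /\ (z < m t.+1)%N by case/copiesP: Azt.
have [tU|] := ltnP t U; first by apply: Or31; apply: leq_trans t_lt (m_mono tU).
rewrite leq_eqVlt => /predU1P[->|]; first exact: Or32.
rewrite leq_eqVlt => /predU1P[->|U1t]; first exact: Or33.
by have := m_mono U1t; lia.
Qed.

Lemma counting_spread A U M : (M < m U.+2)%N ->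
  (counting (spread A) M <= m U + (m U.+1 %/ m U).+1 * counting A (2 * m U)
                           + (M %/ m U.+1).+1 * counting A (2 * m U.+1))%N.
Proof.
move=> M_lt.
have cover : (counting (spread A) M <=
    counting ([set z | z < m U]%N `|` copies A U `|` copies A U.+1) M)%N.
  apply: counting_sub => z zM /spread_cover /(_ (ltn_trans zM M_lt)).
  by case=> ?; [left; left | left; right | right].
apply: (leq_trans cover); apply: (leq_trans (counting_setU _ _ _)).
rewrite leq_add ?counting_copies //; apply: (leq_trans (counting_setU _ _ _)).
rewrite leq_add ?(@counting_le_bound _ _ (m U)) //.
apply: leq_trans (counting_bounded _ (L := m U.+1) _) (counting_copies _ _ _).
by move=> z /copiesP[].
Qed.

Lemma density_zero_spread A : density_zero A -> density_zero (spread A).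
Proof.
move=> dzA K K_gt0.
have [N0 HN0] := dzA (16 * K)%N ltac:(by rewrite muln_gt0 K_gt0).
exists (m (maxn (4 * K) N0).+1) => M M_ge.
have [T /andP[M_ge' M_lt]] := m_segment (leq_trans (m_mono (leq0n _)) M_ge).
have : (maxn (4 * K) N0 < T)%N.
  rewrite ltnNge; apply/negP => leT.
  by have := m_mono (leT : (T.+1 <= (maxn (4 * K) N0).+1)%N); lia.
case: T M_ge' M_lt => // U M_ge' M_lt; rewrite ltnS geq_max => /andP[KU N0U].
apply: leq_trans (leq_mul (leqnn K) (counting_spread A M_lt)) _.
have cU : (16 * K * counting A (2 * m U) <= 2 * m U)%N.
  by apply: HN0; have := m_ge U; lia.
have cU1 : (16 * K * counting A (2 * m U.+1) <= 2 * m U.+1)%N.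
  by apply: HN0; have := m_ge U.+1; lia.
have small : (4 * K * m U <= M)%N.
  apply: leq_trans M_ge'; apply: leq_trans (m_grow U); rewrite leq_mul2r; lia.
have copiesU : (16 * K * ((m U.+1 %/ m U).+1 * counting A (2 * m U)) <= 4 * M)%N.
  rewrite mulnCA; apply: leq_trans (leq_mul (leqnn _) cU) _.
  have := leq_divM (m U.+1) (m U); have := m_lt U; rewrite mulSn; nia.
have copiesU1 : (16 * K * ((M %/ m U.+1).+1 * counting A (2 * m U.+1)) <= 4 * M)%N.
  rewrite mulnCA; apply: leq_trans (leq_mul (leqnn _) cU1) _.
  have := leq_divM M (m U.+1); rewrite mulSn; nia.
nia.
Qed.

Definition spread_code (x : nat) (c : nat + nat * nat) : nat :=
  match c with
  | inl v => if (v < m 0)%N then v else 0%N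
  | inr (t, k) =>
      if (m t <= x < 2 * m t)%N && (x + k * m t < m t.+1)%N
      then (x + k * m t)%N else 0%N
  end.

Definition spread_fun (x y : nat) : nat :=
  if unpickle (trunc_log 4 y) is Some c then spread_code x c else 0%N.

Lemma spread_fun_pow4 x c : spread_fun x (4 ^ pickle c) = spread_code x c.
Proof. by rewrite /spread_fun trunc_expnK // pickleK. Qed.

Lemma spread_fun_spread A x y : A x -> spread A (spread_fun x y).
Proof.
move=> Ax; have spread0 : spread A 0 by left.
rewrite /spread_fun; case: (unpickle _) => [[v|[t k]]|] //=.
  by case: ifP => // v_lt; left.
by case: ifP => // /andP[x_in x_lt]; right; exists t, k, x.
Qed.

Lemma spread_code_surj v : exists t x c,
  (m t <= x < 2 * m t)%N /\ spread_code x c = v.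
Proof.
have [v_lt|v_ge] := ltnP v (m 0).
  exists 0%N, (m 0), (inl v); rewrite /= v_lt; have := m_gt0 0; lia.
have [T /andP[T_le T_lt]] := m_segment v_ge.
have q_gt0 : (0 < v %/ m T)%N by rewrite divn_gt0.
have r_lt := ltn_pmod v (m_gt0 T).
have v_eq : (m T + v %% m T + (v %/ m T).-1 * m T = v)%N.
  by rewrite [in RHS](divn_eq v (m T)); case: (v %/ m T) q_gt0 => // q _; rewrite mulSn; lia.
exists T, (m T + v %% m T)%N, (inr (T, (v %/ m T).-1)); split; first lia.
by rewrite /= v_eq T_lt andbT ifT //; lia.
Qed.

End Spread.

Fixpoint sparse (n : nat -> nat) t : nat :=
  if t is t'.+1 then n (t'.+2 * sparse n t') else n 1.

Lemma sparse_in n t : exists i, sparse n t = n i.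
Proof. by case: t => [|t]; eexists. Qed.

Section Sparse.

Variable n : nat -> nat.
Hypothesis n_incr : forall i, (n i < n i.+1)%N.

Lemma n_ge i : (i <= n i)%N.
Proof. by elim: i => // i IH; apply: leq_ltn_trans IH (n_incr i). Qed.

Lemma sparse_gt0 t : (0 < sparse n t)%N.
Proof. by elim: t => [|t IH]; apply: leq_trans (n_ge _); rewrite ?muln_gt0. Qed.

Lemma sparse_grow t : (t.+2 * sparse n t <= sparse n t.+1)%N.
Proof. exact: n_ge. Qed.

End Sparse.

Local Open Scope ring_scope.

Lemma dens_ratioE A N : dens_ratio A N = (counting A N)%:R / N%:R.
Proof. by rewrite /dens_ratio /counting natr_sum. Qed.

Lemma dens_ratio_ge0 A N : 0 <= dens_ratio A N.
Proof. by rewrite dens_ratioE divr_ge0. Qed.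

Lemma dens_ratio_le_inv A K N : (0 < K)%N -> (0 < N)%N ->
  (dens_ratio A N <= K%:R^-1) = (K * counting A N <= N)%N.
Proof.
move=> K_gt0 N_gt0; rewrite dens_ratioE ler_pdivrMr ?ltr0n //.
by rewrite ler_pdivlMl ?ltr0n // -natrM ler_nat.
Qed.

Lemma upper_density_eq0 A : upper_density A = 0%E <-> density_zero A.
Proof.
have u_ge0 n : (0 <= (dens_ratio A n)%:E)%E by rewrite lee_fin dens_ratio_ge0.
split=> [ud0 K K_gt0|dzA].
  have ud_le0 : (upper_density A <= 0)%E by rewrite ud0.
  have /fine_cvgP[_ /cvgr0Pnorm_le /(_ K%:R^-1)] := limn_esup_le_cvg ud_le0 u_ge0.
  rewrite invr_gt0 ltr0n => /(_ K_gt0) [N0 _ HN0].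
  exists (maxn N0 1) => N; rewrite geq_max => /andP[N0N N_gt0].
  by rewrite -dens_ratio_le_inv // -[dens_ratio _ _]ger0_norm ?dens_ratio_ge0 ?HN0.
suff /cvg_limn_einf_sup[] : (fun n => (dens_ratio A n)%:E) @ \oo --> 0%:E by [].
apply/fine_cvgP; split; first exact: nearW.
apply/cvgr0Pnorm_le => eps eps_gt0.
have [k _ /(_ k (leqnn k)) k_lt] := near_infty_natSinv_lt (PosNum eps_gt0).
have [N0 HN0] := dzA k.+1 isT.
near=> N => /=; rewrite ger0_norm ?dens_ratio_ge0 //.
apply: le_trans (ltW k_lt); rewrite dens_ratio_le_inv //; last by near: N; exists 1%N.
by apply: HN0; near: N; exists N0.
Unshelve. all: by end_near.
Qed.

Theorem mainTheorem11 (n : nat -> nat) (n_incr : forall i, (n i < n i.+1)%N) :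
  let C := [set m : nat | exists i, (n i <= m < 2 * n i)%N] in
  exists (D : set nat) (h : nat -> nat -> nat),
    upper_density D = 0%E /\
    in_clone_dzero (binary_as_fun h) /\
    [set h x y | x in C & y in D] = [set: nat].
Proof.
move=> C; have m_gt0 := sparse_gt0 n_incr; have m_grow := sparse_grow n_incr.
exists pow4, (spread_fun (sparse n)); split; first exact/upper_density_eq0/density_zero_pow4.
split.
  split => // A /upper_density_eq0 dzA; apply/upper_density_eq0.
  apply: density_zero_sub (density_zero_spread m_gt0 m_grow dzA).
  by move=> _ [v Av <-]; apply: spread_fun_spread (Av ord0).
apply/seteqP; split => // v _.
have [t [x [c [x_in <-]]]] := spread_code_surj m_gt0 m_grow v.
have [i mi] := sparse_in n t.
exists x; first by exists i; rewrite -mi.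
by exists (4 ^ pickle c)%N; [exists (pickle c) | rewrite spread_fun_pow4].
Qed.
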